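(* Let $P$ be an integer such that $P^2+4$ is square-free, and let $m\ge 0$ be an integer. Consider the equation $$\sigma_2(n)-n^2=V_{2m}(P,-1)\,n+V_{2m}(P,-1)^2-3$$ in positive integers $n$. Then every solution $n$ with $n>\big(|V_{2m}(P,-1)|+V_{2m}(P,-1)^2-3\big)^3$ is of one of the following forms (so all solutions not of these forms lie in the finite, computable range $n\le(|V_{2m}(P,-1)|+V_{2m}(P,-1)^2-3)^3$): (1) $n=V_{2k+1}(P,-1)\,V_{2k+2m+1}(P,-1)$ for some integer $k\ge 0$, with $V_{2k+1}(P,-1)$ and $V_{2k+2m+1}(P,-1)$ both prime; (2) $n=V_{2k+1}(P,-1)\,V_{2m-2k-1}(P,-1)$ for some integer $k$ with $0\le k\le m-1$ and $m\ne 2k+1$, with $V_{2k+1}(P,-1)$ and $V_{2m-2k-1}(P,-1)$ both prime.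
   Context: For a positive integer $n$ and $k\ge 0$, $\sigma_k(n)=\sum_{d\mid n,\ d>0} d^k$. For integers $P,Q$, the Lucas sequences are defined for $j\ge 0$ by $U_0(P,Q)=0$, $U_1(P,Q)=1$, $U_j(P,Q)=P\,U_{j-1}(P,Q)-Q\,U_{j-2}(P,Q)$ for $j>1$, and $V_0(P,Q)=2$, $V_1(P,Q)=P$, $V_j(P,Q)=P\,V_{j-1}(P,Q)-Q\,V_{j-2}(P,Q)$ for $j>1$. An integer is square-free if it is not divisible by the square of any prime. *)

From mathcomp Require Import all_boot all_order all_algebra.
Set Implicit Arguments. Unset Strict Implicit. Unset Printing Implicit Defensive.
Import Order.TTheory GRing.Theory Num.Theory.
Local Open Scope ring_scope.

Definition sigma (k n : nat) : nat := (\sum_(d <- divisors n) d ^ k)%N.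

Fixpoint lucas_pair (P Q a0 a1 : int) (j : nat) : int * int :=
  match j with
  | 0%N => (a0, a1)
  | j'.+1 => let: (x, y) := lucas_pair P Q a0 a1 j' in (y, P * y - Q * x)
  end.

Definition lucasU (P Q : int) (j : nat) : int := (lucas_pair P Q 0 1 j).1.
Definition lucasV (P Q : int) (j : nat) : int := (lucas_pair P Q 2 P j).1.

Definition squarefree_int (x : int) : Prop :=
  forall p : nat, prime p -> ~ ((p%:Z * p%:Z) %| x)%Z.

(* Write V for V_{2m}(P,-1), so that P can be assumed positive (V_j(-P,-1) = (-1)^j V_j(P,-1))
   and V >= 2.  Comparing sigma_2(n) with the divisors 1, n/p, n (p the least prime factor of
   n) shows that a solution n > (V + V^2 - 3)^3 is a product p q of primes p < q, and the
   equation becomes p^2 - V p q + q^2 = V^2 - 4.  Its discriminant in q is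
   (V^2 - 4)(p^2 + 4) = (P^2 + 4) U_{2m}^2 (p^2 + 4), so as P^2 + 4 is square-free,
   p^2 + 4 = (P^2 + 4) w^2.  By a Euclidean descent on the form x^2 - P x y - y^2, the
   solutions of this Pell equation are the V_j with j odd.  The identity
   V_j^2 - V V_j V_{j+2m} + V_{j+2m}^2 = V^2 - 4 (j odd) then makes q = V_{j+2m}, the other
   root of the quadratic being smaller than p.  In particular the second family never occurs. *)

From mathcomp Require Import all_boot all_order all_algebra.
From mathcomp Require Import zify ring.
Import Order.TTheory GRing.Theory Num.Theory.
Local Open Scope ring_scope.

Definition lucas_rec (P Q : int) (f : nat -> int) :=
  forall j, f j.+2 = P * f j.+1 - Q * f j.

Definition lucas_form (P Q x y : int) := x ^+ 2 - P * x * y + Q * y ^+ 2.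

Section LucasIdentities.

Variables P Q : int.
Local Notation U := (lucasU P Q).
Local Notation V := (lucasV P Q).

Lemma lucas_pair_rec a0 a1 : lucas_rec P Q (fun j => (lucas_pair P Q a0 a1 j).1).
Proof. by move=> j /=; case: (lucas_pair P Q a0 a1 j). Qed.

Lemma lucasU_rec : lucas_rec P Q U. Proof. exact: lucas_pair_rec. Qed.
Lemma lucasV_rec : lucas_rec P Q V. Proof. exact: lucas_pair_rec. Qed.

Lemma lucas_rec_eq {f g : nat -> int} : lucas_rec P Q f -> lucas_rec P Q g ->
  f 0%N = g 0%N -> f 1%N = g 1%N -> f =1 g.
Proof.
move=> recf recg f0 f1.
suff fg j : f j = g j /\ f j.+1 = g j.+1 by move=> j; case: (fg j).
by elim: j => [|j [fgj fgj1]] //; rewrite recf recg fgj fgj1.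
Qed.

Lemma lucas_form_rec {f : nat -> int} j : lucas_rec P Q f ->
  lucas_form P Q (f j.+1) (f j) = Q ^+ j * lucas_form P Q (f 1%N) (f 0%N).
Proof.
move=> recf; elim: j => [|j IHj]; first by rewrite mul1r.
by rewrite exprS -mulrA -IHj /lucas_form recf; ring.
Qed.

Lemma lucasU_form j : lucas_form P Q (U j.+1) (U j) = Q ^+ j.
Proof. by rewrite (lucas_form_rec _ lucasU_rec) /lucas_form /lucasU /=; ring. Qed.

Lemma lucasV_form j : lucas_form P Q (V j.+1) (V j) = - Q ^+ j * (P ^+ 2 - 4 * Q).
Proof. by rewrite (lucas_form_rec _ lucasV_rec) /lucas_form /lucasV /=; ring. Qed.

Lemma lucasV_U j : V j = 2 * U j.+1 - P * U j.
Proof.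
move: j; apply: (lucas_rec_eq lucasV_rec (g := fun j => 2 * U j.+1 - P * U j)).
- by move=> j; rewrite !lucasU_rec; ring.
- by rewrite /lucasU /lucasV /=; ring.
- by rewrite /lucasU /lucasV /=; ring.
Qed.

Lemma lucasV_sqr j : V j ^+ 2 - (P ^+ 2 - 4 * Q) * U j ^+ 2 = 4 * Q ^+ j.
Proof. by rewrite lucasV_U -lucasU_form /lucas_form; ring. Qed.

Lemma lucas_rec_addn {f : nat -> int} i d : lucas_rec P Q f ->
  f (i + d.+1)%N = U d.+1 * f i.+1 - Q * U d * f i.
Proof.
move=> recf; move: d.
apply: (lucas_rec_eq (f := fun d => f (i + d.+1)%N)
                     (g := fun d => U d.+1 * f i.+1 - Q * U d * f i)).
- by move=> d; rewrite !addnS recf.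
- by move=> d; rewrite !lucasU_rec; ring.
- by rewrite addn1 /lucasU /=; ring.
- by rewrite addn2 recf /lucasU /=; ring.
Qed.

Lemma lucas_form_addn {f : nat -> int} i d : lucas_rec P Q f ->
  lucas_form (V d) (Q ^+ d) (f (i + d)%N) (f i) = U d ^+ 2 * lucas_form P Q (f i.+1) (f i).
Proof.
move=> recf; case: d => [|d]; first by rewrite addn0 /lucas_form /lucasV /lucasU /=; ring.
rewrite (lucas_rec_addn _ _ recf) lucasV_U lucasU_rec exprS -lucasU_form /lucas_form.
ring.
Qed.

Lemma lucasV_form_addn i d :
  lucas_form (V d) (Q ^+ d) (V (i + d)%N) (V i) = - Q ^+ i * (V d ^+ 2 - 4 * Q ^+ d).
Proof.
rewrite (lucas_form_addn _ _ lucasV_rec) lucasV_form -lucasV_sqr; ring.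
Qed.

End LucasIdentities.

Lemma lucasV_opp P Q j : lucasV (- P) Q j = (-1) ^+ j * lucasV P Q j.
Proof.
move: j; apply: (@lucas_rec_eq (- P) Q _ (fun j => (-1) ^+ j * lucasV P Q j) (lucasV_rec _ _)).
- by move=> j; rewrite lucasV_rec !exprS; ring.
- by rewrite mul1r.
- by rewrite expr1 mulN1r.
Qed.

Section PositiveParameter.

Variable P : int.
Hypothesis P_gt0 : 0 < P.
Local Notation U := (lucasU P (-1)).
Local Notation V := (lucasV P (-1)).

Lemma lucasU_gt0 j : (0 < j)%N -> 0 < U j.
Proof.
case: j => // j _; suff: 0 <= U j /\ 0 < U j.+1 by case.
elim: j => [|j [Uj_ge0 Uj1_gt0]]; first by [].
by rewrite lucasU_rec; split; nia.
Qed.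

Lemma lucasV_gt0 j : 0 < V j.
Proof.
suff: 0 < V j /\ 0 < V j.+1 by case.
elim: j => [|j [Vj_gt0 Vj1_gt0]]; first by [].
by rewrite lucasV_rec; split; nia.
Qed.

Lemma lucasV_ltS j : V j.+1 < V j.+2.
Proof. by rewrite lucasV_rec; have := lucasV_gt0 j; have := lucasV_gt0 j.+1; nia. Qed.

Lemma lucasV_lt i j : (0 < i < j)%N -> V i < V j.
Proof.
case: i => // i /=; elim: j => // j IHj; rewrite ltnS leq_eqVlt.
case/orP=> [/eqP <-|lt_ij]; first exact: lucasV_ltS.
by case: j lt_ij IHj => // j lt_ij /(_ lt_ij) /lt_trans; apply; apply: lucasV_ltS.
Qed.

Lemma lucasV_ge2 j : j != 1%N -> 2 <= V j.
Proof.
case: j => [|[|j]] // _; have := lucasV_lt 1 j.+2 isT.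
by rewrite [V 1%N]/lucasV /=; lia.
Qed.

Lemma lucas_form_unit_lucasU (u v : int) : 0 < u -> 0 <= v ->
  lucas_form P (-1) u v = 1 \/ lucas_form P (-1) u v = -1 ->
  exists j, u = U j.+1 /\ v = U j.
Proof.
have [N] : exists N : nat, u + v <= N%:Z by exists (absz (u + v)); lia.
elim: N u v => [|N IHN] u v le_uvN u_gt0 v_ge0 form_unit; first lia.
have [v0|v_gt0] := eqVneq v 0.
  exists 0%N; rewrite v0 /lucasU /=; split=> //.
  by move: form_unit; rewrite /lucas_form v0; nia.
(* One step of the Euclidean descent [(u, v) -> (v, u - P v)]. *)
set t := u - P * v.
have ut : u * t = v ^+ 2 + lucas_form P (-1) u v by rewrite /t /lucas_form; ring.
have t_ge0 : 0 <= t by case: form_unit => form_unit; rewrite form_unit in ut; nia.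
have form_vt : lucas_form P (-1) v t = - lucas_form P (-1) u v by rewrite /t /lucas_form; ring.
have [||||j [ev et]] := IHN v t; [rewrite /t; nia | lia | done | | ].
  by rewrite form_vt; case: form_unit => ->; [right | left].
by exists j.+1; rewrite lucasU_rec -ev -et /t; split; ring.
Qed.

Lemma pell_sum_even (x w : int) : x ^+ 2 + 4 = (P ^+ 2 + 4) * w ^+ 2 -> exists u, x + P * w = 2 * u.
Proof.
move=> pell; have [q [even|odd]] : exists q, x + P * w = 2 * q \/ x + P * w = 2 * q + 1.
  by exists ((x + P * w) %/ 2)%Z; lia.
  by exists q.
have ex : x = 2 * q + 1 - P * w by lia.
have parity : (2 * q + 1 - P * w) ^+ 2 + 4 - (P ^+ 2 + 4) * w ^+ 2
              = 4 * (q ^+ 2 + q - q * (P * w) - w ^+ 2) + 5 - 2 * (P * w) by ring.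
rewrite -ex in parity; lia.
Qed.

Lemma pell_lucasV (x w : int) : 0 <= x -> x ^+ 2 + 4 = (P ^+ 2 + 4) * w ^+ 2 ->
  exists2 j, odd j & x = V j.
Proof.
wlog w_ge0 : w / 0 <= w.
  move=> wlog_w x_ge0 pell; have [w_ge0|w_lt0] := lerP 0 w; first exact: wlog_w w w_ge0 x_ge0 pell.
  by apply: (wlog_w (- w)); rewrite ?sqrrN //; lia.
move=> x_ge0 pell; have [u xPw] := pell_sum_even _ _ pell.
have ex : x = 2 * u - P * w by lia.
have form_u : lucas_form P (-1) u w = -1.
  suff : 4 * lucas_form P (-1) u w = x ^+ 2 + 4 - (P ^+ 2 + 4) * w ^+ 2 - 4 by lia.
  by rewrite ex /lucas_form; ring.
have u_gt0 : 0 < u by nia.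
have [j [eu ew]] := lucas_form_unit_lucasU _ _ u_gt0 w_ge0 (or_intror form_u).
exists j; last by rewrite lucasV_U -eu -ew.
by have := lucasU_form P (-1) j; rewrite -eu -ew form_u -signr_odd; case: (odd j).
Qed.

End PositiveParameter.

Lemma squarefree_dvdn_sqr (D y : nat) : (0 < D)%N ->
  (forall p, prime p -> ~~ (p ^ 2 %| D)%N) -> (D %| y ^ 2)%N -> (D %| y)%N.
Proof.
move=> D_gt0 sqfD Dy2; apply/(dvdn_partP _ D_gt0) => p; rewrite mem_primes.
case/and3P=> p_pr _ pD; rewrite p_part.
have logD : (logn p D <= 1)%N by rewrite leqNgt -pfactor_dvdn ?sqfD.
have py : (p %| y)%N by have := dvdn_trans pD Dy2; rewrite Euclid_dvdX // andbT.
by rewrite (dvdn_trans (dvdn_exp2l p logD)) ?expn1.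
Qed.

Lemma squarefree_dvdz_sqr (D y : int) : squarefree_int D -> D != 0 ->
  (D %| y ^+ 2)%Z -> (D %| y)%Z.
Proof.
move=> sqfD D_neq0; rewrite !dvdzE abszX; apply: squarefree_dvdn_sqr; first lia.
by move=> p p_pr; apply/negP => pD; apply: (sqfD p p_pr); rewrite dvdzE abszM.
Qed.

Lemma squarefree_sqr_cofactor (D s z c : int) : squarefree_int D -> D != 0 -> s != 0 ->
  z ^+ 2 = D * s ^+ 2 * c -> exists w, c = D * w ^+ 2.
Proof.
move=> sqfD D_neq0 s_neq0 zE.
have /dvdzP[z1 ez] : (s %| z)%Z.
  by rewrite -(@dvdz_pexp2r _ _ 2) // zE; apply/dvdzP; exists (D * c); ring.
have z1E : z1 ^+ 2 = D * c.
  by apply: (mulIf (expf_neq0 2 s_neq0)); rewrite -exprMn -ez zE; ring.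
have /dvdzP[w ew] : (D %| z1)%Z by apply: squarefree_dvdz_sqr; rewrite // z1E dvdz_mulr.
by exists w; apply: (mulfI D_neq0); rewrite -z1E ew; ring.
Qed.

Section DivisorSums.
Local Open Scope nat_scope.

Lemma sigma_ge_sum k n s : 0 < n -> uniq s -> all (dvdn^~ n) s ->
  \sum_(d <- s) d ^ k <= sigma k n.
Proof.
move=> n_gt0 uniq_s /allP s_dvd.
apply: (uniq_sub_le_big leqnn (fun x y => leq_addr y x)) => // [|d /s_dvd].
  exact: divisors_uniq.
by rewrite -dvdn_divisors.
Qed.

Lemma sigma_eq_sum k n s : 0 < n -> sorted ltn s -> (forall d, (d %| n) = (d \in s)) ->
  sigma k n = \sum_(d <- s) d ^ k.
Proof.
move=> n_gt0 sorted_s dvd_s; congr (\sum_(d <- _) _).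
apply: (irr_sorted_eq ltn_trans ltnn) => // [|d]; first exact: sorted_divisors_ltn.
by rewrite -dvd_s dvdn_divisors.
Qed.

Lemma sigma_prime_power k p e : prime p ->
  sigma k (p ^ e) = \sum_(i <- iota 0 e.+1) (p ^ i) ^ k.
Proof.
move=> p_pr; have p_gt1 := prime_gt1 p_pr.
rewrite (@sigma_eq_sum _ _ [seq p ^ i | i <- iota 0 e.+1]) ?big_map ?expn_gt0 ?prime_gt0 //.
  by apply: (homo_sorted _ _ (iota_ltn_sorted 0 e.+1)) => i j /=; rewrite ltn_exp2l.
move=> d; apply/(dvdn_pfactor _ _ p_pr)/mapP => [[i le_ie ->]|[i]].
  by exists i; rewrite // mem_iota.
by rewrite mem_iota => /andP[_ le_ie] ->; exists i.
Qed.

Lemma sigma_prime k p : prime p -> sigma k p = 1 + p ^ k.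
Proof.
by move=> p_pr; have := sigma_prime_power k p 1 p_pr; rewrite !big_cons big_nil expn1 exp1n addn0.
Qed.

Lemma sigma_prime_sqr k p : prime p -> sigma k (p ^ 2) = 1 + p ^ k + (p ^ 2) ^ k.
Proof. by move=> p_pr; rewrite sigma_prime_power // !big_cons big_nil expn1 exp1n addn0 addnA. Qed.

Lemma dvdn_mul_primes p q d : prime p -> prime q ->
  (d %| p * q) = (d \in [:: 1; p; q; p * q]).
Proof.
move=> p_pr q_pr; rewrite !inE; apply/idP/idP; last first.
  case/or4P=> /eqP ->; [exact: dvd1n | exact: dvdn_mulr | exact: dvdn_mull | exact: dvdnn].
have dvd_q e : e %| q -> (e == 1) || (e == q) by case/primeP: q_pr => _; apply.
have [/dvdnP[e ->]|pNd] := boolP (p %| d).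
  rewrite mulnC dvdn_pmul2l ?prime_gt0 // => /dvd_q /orP[] /eqP ->.
    by rewrite muln1 eqxx orbT.
  by rewrite eqxx !orbT.
rewrite Gauss_dvdr; last by rewrite coprime_sym prime_coprime.
by move=> /dvd_q /orP[] ->; rewrite ?orbT.
Qed.

Lemma sigma_mul_primes k p q : prime p -> prime q -> p < q ->
  sigma k (p * q) = 1 + p ^ k + q ^ k + (p * q) ^ k.
Proof.
move=> p_pr q_pr lt_pq; have p_gt1 := prime_gt1 p_pr.
rewrite (@sigma_eq_sum _ _ [:: 1; p; q; p * q]) ?muln_gt0 ?prime_gt0 //.
- by rewrite !big_cons big_nil exp1n addn0 !addnA.
- by rewrite /= p_gt1 lt_pq ltn_Pmull // prime_gt0.
- by move=> d; rewrite dvdn_mul_primes.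
Qed.

End DivisorSums.

Section LargeSolution.

Variables (V : int) (n : nat).
Hypothesis V_ge2 : 2 <= V.
Hypothesis sigmaE : (sigma 2 n)%:Z - n%:Z ^+ 2 = V * n%:Z + V ^+ 2 - 3.
Let B := V + V ^+ 2 - 3.
Hypothesis n_large : B ^+ 3 < n%:Z.

Let B_ge3 : 3 <= B. Proof. by rewrite /B; nia. Qed.

Lemma large_solution_gt1 : (1 < n)%N.
Proof. have : 27 <= B ^+ 3 by rewrite !exprS expr0 mulr1; nia. lia. Qed.

Lemma large_solution_not_prime : ~~ prime n.
Proof. by apply/negP => /(sigma_prime 2) sigma_n; move: sigmaE; rewrite sigma_n; nia. Qed.

Lemma large_solution_divisor_sqr_lt r : (1 < r < n)%N -> (r %| n)%N -> r%:Z ^+ 2 < B * n%:Z.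
Proof.
move=> /andP[r_gt1 lt_rn] r_dvd.
have uniq_s : uniq [:: 1; r; n]%N by rewrite /= !inE; lia.
have := sigma_ge_sum 2 n [:: 1; r; n]%N (ltnW (ltn_trans r_gt1 lt_rn)) uniq_s.
rewrite /= r_dvd dvd1n dvdnn !big_cons big_nil => /(_ isT).
move: sigmaE; rewrite /B; nia.
Qed.

Let p := pdiv n.
Let r := (n %/ p)%N.

Let p_pr : prime p. Proof. exact: pdiv_prime large_solution_gt1. Qed.
Let n_eq : n = (p * r)%N. Proof. by rewrite /r mulnC divnK // pdiv_dvd. Qed.

Let r_gt1 : (1 < r)%N.
Proof.
have r_gt0 : (0 < r)%N by move: large_solution_gt1; rewrite n_eq; case: r => //; rewrite muln0.
have r_neq1 : r != 1%N.
  by apply: (contraNneq _ large_solution_not_prime) => r1; rewrite n_eq r1 muln1.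
lia.
Qed.

Let r_lt : r%:Z < B * p%:Z.
Proof.
have lt_rn : (r < n)%N by rewrite n_eq ltn_Pmull ?prime_gt1 // ltnW.
have := large_solution_divisor_sqr_lt r; rewrite r_gt1 lt_rn n_eq dvdn_mull // => /(_ isT isT).
rewrite PoszM; have := r_gt1; nia.
Qed.

Let p_gt : B < p%:Z.
Proof.
have p_gt0 : 0 < p%:Z by rewrite ltz_nat prime_gt0.
have : n%:Z < p%:Z * (B * p%:Z) by rewrite n_eq PoszM ltr_pM2l.
rewrite mulrCA; move: n_large => /lt_trans/[apply]; rewrite exprS ltr_pM2l; last lia.
move=> lt_B2; rewrite ltNge; apply/negP => le_pB.
have : p%:Z * p%:Z <= B * B by apply: ler_pM; lia.
by rewrite -expr2; lia.
Qed.

Let r_pr : prime r.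
Proof.
apply: contraT => r_npr.
have r_eq : r = (pdiv r * (r %/ pdiv r))%N by rewrite mulnC divnK // pdiv_dvd.
have s_pr := pdiv_prime r_gt1.
set s := pdiv r in r_eq s_pr; set t := (r %/ s)%N in r_eq.
have t_gt1 : (1 < t)%N.
  have t_neq0 : t != 0%N by apply: contraTneq r_gt1 => t0; rewrite r_eq t0 muln0.
  have t_neq1 : t != 1%N by apply: contraNneq r_npr => t1; rewrite r_eq t1 muln1.
  lia.
have dvd_n d : (d %| r)%N -> (d %| n)%N by move=> d_dvd; rewrite n_eq dvdn_mull.
have le_ps : (p <= s)%N by apply: pdiv_min_dvd; rewrite ?prime_gt1 // dvd_n // r_eq dvdn_mulr.
have le_pt : (p <= t)%N by apply: pdiv_min_dvd; rewrite // dvd_n // r_eq dvdn_mull.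
have le_ppr : (p * p <= r)%N by rewrite r_eq leq_mul.
have : p%:Z * p%:Z < p%:Z * p%:Z.
  apply: (le_lt_trans (y := r%:Z)); first by rewrite -PoszM lez_nat.
  by apply: (lt_trans r_lt); rewrite ltr_pM2r // ltz_nat prime_gt0.
by rewrite ltxx.
Qed.

Lemma large_solution_prime_pair : exists p q : nat, [/\ prime p, prime q, (p < q)%N, n = (p * q)%N &
  p%:Z ^+ 2 - V * p%:Z * q%:Z + q%:Z ^+ 2 = V ^+ 2 - 4].
Proof.
have p_gt1 := prime_gt1 p_pr.
have le_pr : (p <= r)%N by apply: pdiv_min_dvd; rewrite // n_eq dvdn_mull.
have lt_pr : (p < r)%N.
  rewrite ltn_neqAle le_pr andbT; apply/eqP => epr; move: sigmaE.
  rewrite n_eq -epr -[(p * p)%N]/(p ^ 2)%N (sigma_prime_sqr 2 _ p_pr).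
  have : 2 * p%:Z ^+ 2 <= V * p%:Z ^+ 2 by rewrite ler_wpM2r ?exprn_ge0.
  lia.
exists p, r; split=> //.
by move: sigmaE; rewrite n_eq (sigma_mul_primes 2 _ _ p_pr r_pr lt_pr); lia.
Qed.

End LargeSolution.

Lemma quadratic_root_gt_unique (V p q r : int) : 2 <= V -> 0 <= p -> p < q -> p < r ->
  p ^+ 2 - V * p * q + q ^+ 2 = V ^+ 2 - 4 -> p ^+ 2 - V * p * r + r ^+ 2 = V ^+ 2 - 4 ->
  q = r.
Proof.
move=> V_ge2 p_ge0 lt_pq lt_pr qE rE.
have /eqP : (q - r) * (q + r - V * p) = 0.
  have -> : (q - r) * (q + r - V * p) =
            (p ^+ 2 - V * p * q + q ^+ 2) - (p ^+ 2 - V * p * r + r ^+ 2) by ring.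
  by rewrite qE rE subrr.
rewrite mulf_eq0 subr_eq0 => /orP[/eqP // | /eqP roots_sum].
(* Vieta: the roots [q] and [r] would have product [p ^+ 2 - (V ^+ 2 - 4) <= p ^+ 2]. *)
have : q * r = p ^+ 2 - (V ^+ 2 - 4) by rewrite -rE (_ : q = V * p - r); [ring | lia].
have : p * p < q * r by apply: ltr_pM.
nia.
Qed.

Lemma lucasV_pair_of_quadratic (P : int) (m : nat) (p q : int) :
  0 < P -> squarefree_int (P ^+ 2 + 4) -> 0 <= p -> p < q ->
  let V := lucasV P (-1) (2 * m) in
  p ^+ 2 - V * p * q + q ^+ 2 = V ^+ 2 - 4 ->
  exists2 j, odd j & p = lucasV P (-1) j /\ q = lucasV P (-1) (j + 2 * m).
Proof.
move=> P_gt0 sqfD p_ge0 lt_pq V pqE.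
have V_ge2 : 2 <= V by apply: lucasV_ge2; lia.
have m_gt0 : (0 < m)%N.
  rewrite lt0n; apply: contraTneq lt_pq => m0; move: pqE; rewrite /V m0 /lucasV /= => pqE.
  have : (q - p) ^+ 2 = 0 by lia.
  by move/eqP; rewrite sqrf_eq0 subr_eq0 => /eqP ->; rewrite ltxx.
have VU : V ^+ 2 - 4 = (P ^+ 2 + 4) * lucasU P (-1) (2 * m) ^+ 2.
  by have := lucasV_sqr P (-1) (2 * m); rewrite exprM sqrrN !expr1n -/V; lia.
have disc : (2 * q - V * p) ^+ 2 = (P ^+ 2 + 4) * lucasU P (-1) (2 * m) ^+ 2 * (p ^+ 2 + 4).
  have -> : (2 * q - V * p) ^+ 2 =
            4 * (p ^+ 2 - V * p * q + q ^+ 2) + (V ^+ 2 - 4) * p ^+ 2 by ring.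
  by rewrite pqE VU; ring.
have [||w pell] := squarefree_sqr_cofactor _ _ _ _ sqfD _ _ disc.
- by rewrite lt0r_neq0 //; nia.
- by rewrite lt0r_neq0 // lucasU_gt0 // muln_gt0.
have [j odd_j ep] := pell_lucasV _ P_gt0 _ _ p_ge0 pell.
exists j => //; split=> //.
set r := lucasV P (-1) (j + 2 * m).
have rE : p ^+ 2 - V * p * r + r ^+ 2 = V ^+ 2 - 4.
  have := lucasV_form_addn P (-1) j (2 * m).
  by rewrite exprM sqrrN !expr1n -signr_odd odd_j expr1 -/V -/r -ep /lucas_form; lia.
have lt_pr : p < r by rewrite ep; apply: lucasV_lt; rewrite // odd_gt0 //=; lia.
exact: (quadratic_root_gt_unique _ _ _ _ V_ge2 p_ge0 lt_pq lt_pr pqE rE).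
Qed.

Lemma large_solution_lucasV (P : int) (m n : nat) :
  0 < P -> squarefree_int (P ^+ 2 + 4) ->
  let V := lucasV P (-1) (2 * m) in
  (sigma 2 n)%:Z - n%:Z ^+ 2 = V * n%:Z + V ^+ 2 - 3 ->
  (V + V ^+ 2 - 3) ^+ 3 < n%:Z ->
  exists k : nat,
      n%:Z = lucasV P (-1) (2 * k + 1) * lucasV P (-1) (2 * k + 2 * m + 1)
      /\ prime `|lucasV P (-1) (2 * k + 1)|%N
      /\ prime `|lucasV P (-1) (2 * k + 2 * m + 1)|%N.
Proof.
move=> P_gt0 sqfD V sigmaE n_large.
have V_ge2 : 2 <= V by apply: lucasV_ge2; lia.
have [p [q [p_pr q_pr lt_pq -> pqE]]] := large_solution_prime_pair _ _ V_ge2 sigmaE n_large.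
have [||j odd_j [ep eq]] := lucasV_pair_of_quadratic P m p q P_gt0 sqfD _ _ pqE; [by [] | by [] |].
have ej : (2 * j./2 + 1 = j)%N by rewrite -[RHS]odd_double_half odd_j -mul2n addnC.
exists j./2; rewrite -addnAC ej -ep -eq.
by rewrite PoszM.
Qed.

Theorem theorem1p5 (P : int) (m n : nat) :
  squarefree_int (P ^+ 2 + 4) ->
  (0 < n)%N ->
  let V := lucasV P (-1) (2 * m) in
  (sigma 2 n)%:Z - n%:Z ^+ 2 = V * n%:Z + V ^+ 2 - 3 ->
  (`|V| + V ^+ 2 - 3) ^+ 3 < n%:Z ->
  (exists k : nat,
      n%:Z = lucasV P (-1) (2 * k + 1) * lucasV P (-1) (2 * k + 2 * m + 1)
      /\ prime `|lucasV P (-1) (2 * k + 1)|%N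
      /\ prime `|lucasV P (-1) (2 * k + 2 * m + 1)|%N)
  \/
  (exists k : nat,
      [/\ (k < m)%N, m <> (2 * k + 1)%N,
          n%:Z = lucasV P (-1) (2 * k + 1) * lucasV P (-1) (2 * m - 2 * k - 1),
          prime `|lucasV P (-1) (2 * k + 1)|%N
        & prime `|lucasV P (-1) (2 * m - 2 * k - 1)|%N]).
Proof.
move=> sqfD _ V sigmaE n_large; left.
have V_opp : lucasV (- P) (-1) (2 * m) = V by rewrite lucasV_opp exprM sqrrN !expr1n mul1r.
have V_odd_opp j : odd j -> lucasV (- P) (-1) j = - lucasV P (-1) j.
  by move=> odd_j; rewrite lucasV_opp -signr_odd odd_j mulN1r.
have [P_lt0|P_gt0|P0] := ltgtP P 0.
- have V_gt0 : 0 < V by rewrite -V_opp lucasV_gt0 // oppr_gt0.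
  rewrite gtr0_norm // in n_large; rewrite -sqrrN in sqfD; rewrite -V_opp in sigmaE n_large.
  have [|k [nE [pr1 pr2]]] := large_solution_lucasV (- P) m n _ sqfD sigmaE n_large.
    by rewrite oppr_gt0.
  have odd1 : odd (2 * k + 1) by rewrite oddD oddM.
  have odd2 : odd (2 * k + 2 * m + 1) by rewrite -mulnDr oddD oddM.
  by exists k; move: nE pr1 pr2; rewrite !V_odd_opp // mulrNN !abszN.
- have V_gt0 : 0 < V by apply: lucasV_gt0.
  by rewrite gtr0_norm // in n_large; apply: large_solution_lucasV.
- by case: (sqfD 2%N isT); rewrite P0.
Qed.
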